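(* $\mathsf{LC}$ is sound and complete for finite perfect Kripke models with tree frames: for every modal proposition $A$, $\mathsf{LC}\vdash A$ iff $A$ is forced at every node of every finite perfect Kripke model with tree frame.
   Context: Modal language: propositional variables, $\bot$, $\wedge,\vee,\to$, $\Box$. $\mathsf{iGL}$: intuitionistic propositional logic in the modal language plus $\Box(A\to B)\to(\Box A\to\Box B)$, $\Box A\to\Box\Box A$, $\Box(\Box A\to A)\to\Box A$, closed under modus ponens and necessitation. $\mathsf{LC}:=\mathsf{iGL}+\{A\to\Box A\}$. A Kripke model is $(K,<,\mathcal{R},V)$ with $(K,<)$ a partial order, $\mathcal{R}$ a binary relation with $(\le;\mathcal{R})\subseteq\mathcal{R}$ (composition: $\alpha(R;S)\gamma$ iff $\alpha R\beta S\gamma$ for some $\beta$), $V$ a monotone valuation of variables; forcing is the usual intuitionistic one for $\wedge,\vee,\to,\bot$, and $\alpha\Vdash\Box A$ iff $\beta\Vdash A$ for all $\beta$ with $\alpha\mathcal{R}\beta$. It is perfect if $(\mathcal{R};\le)\subseteq\mathcal{R}$, $\mathcal{R}^{-1}$ is well-founded and $\mathcal{R}\subseteq<$; finite if $K$ is finite; has a tree frame if $(K,\le)$ is a tree. *)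

From Stdlib Require Import List.

Inductive form : Type :=
| Var : nat -> form
| Bot : form
| And : form -> form -> form
| Or  : form -> form -> form
| Imp : form -> form -> form
| Box : form -> form.

Inductive LC_prf : form -> Prop :=
| ax_K1 A B : LC_prf (Imp A (Imp B A))
| ax_S A B C : LC_prf (Imp (Imp A (Imp B C)) (Imp (Imp A B) (Imp A C)))
| ax_andE1 A B : LC_prf (Imp (And A B) A)
| ax_andE2 A B : LC_prf (Imp (And A B) B)
| ax_andI A B : LC_prf (Imp A (Imp B (And A B)))
| ax_orI1 A B : LC_prf (Imp A (Or A B))
| ax_orI2 A B : LC_prf (Imp B (Or A B))
| ax_orE A B C : LC_prf (Imp (Imp A C) (Imp (Imp B C) (Imp (Or A B) C)))
| ax_efq A : LC_prf (Imp Bot A)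
| ax_boxK A B : LC_prf (Imp (Box (Imp A B)) (Imp (Box A) (Box B)))
| ax_box4 A : LC_prf (Imp (Box A) (Box (Box A)))
| ax_Lob A : LC_prf (Imp (Box (Imp (Box A) A)) (Box A))
| ax_LC A : LC_prf (Imp A (Box A))
| rule_MP A B : LC_prf (Imp A B) -> LC_prf A -> LC_prf B
| rule_Nec A : LC_prf A -> LC_prf (Box A).

Record model : Type := Model {
  world : Type;
  lt : world -> world -> Prop;
  R : world -> world -> Prop;
  V : nat -> world -> Prop;
  lt_irrefl : forall x, ~ lt x x;
  lt_trans : forall x y z, lt x y -> lt y z -> lt x z;
  le_R : forall x y z, (x = y \/ lt x y) -> R y z -> R x z;
  V_mono : forall p x y, (x = y \/ lt x y) -> V p x -> V p y
}.

Definition le (M : model) (x y : world M) : Prop := x = y \/ lt M x y.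

Fixpoint forces (M : model) (x : world M) (A : form) : Prop :=
  match A with
  | Var p => V M p x
  | Bot => False
  | And A B => forces M x A /\ forces M x B
  | Or A B => forces M x A \/ forces M x B
  | Imp A B => forall y, le M x y -> forces M y A -> forces M y B
  | Box A => forall y, R M x y -> forces M y A
  end.

Definition perfect (M : model) : Prop :=
  (forall x y z, R M x y -> le M y z -> R M x z) /\
  well_founded (fun y x : world M => R M x y) /\
  (forall x y, R M x y -> lt M x y).

Definition finite_model (M : model) : Prop :=
  exists l : list (world M), forall x, In x l.

Definition tree_frame (M : model) : Prop :=
  (exists r : world M, forall x, le M r x) /\
  (forall x y z : world M, le M y x -> le M z x -> le M y z \/ le M z y).

From Stdlib Require Import List Lia Wf_nat Classical ClassicalEpsilon ProofIrrelevance.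
Import ListNotations.

(** Soundness is a check of the axioms on perfect models: Löb's axiom holds because
    R^{-1} is well-founded, and [A -> Box A] because R is contained in < and forcing is
    persistent.  For completeness, an unprovable A is refuted in a canonical model built
    from prime theories over the subformulas of A.  Its worlds are the strictly increasing
    chains of such theories starting from a prime theory omitting A, ordered by extension,
    so the frame is a finite tree; x R y when y strictly extends x and contains C whenever
    x contains [Box C].  The existence lemma for [Box] is where LC enters: if [Box A] is
    not in x, then x together with the unboxed [Box]-formulas of x and [Box A] itself does
    not derive A, by Löb's axiom and [y -> Box y]. *)

(** * Soundness *)

Section KripkeSemantics.
Variable M : model.

Lemma model_le_refl (x : world M) : le M x x.
Proof. now left. Qed.

Lemma model_le_trans (x y z : world M) : le M x y -> le M y z -> le M x z.
Proof. unfold le; intros [->|Hxy] [->|Hyz]; auto. right; eapply lt_trans; eauto. Qed.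

Lemma forces_mono A : forall x y : world M, le M x y -> forces M x A -> forces M y A.
Proof.
  induction A; simpl; intros x y Hxy Hx.
  - eapply V_mono; eauto.
  - exact Hx.
  - destruct Hx; split; eauto.
  - destruct Hx; [left|right]; eauto.
  - intros z Hyz; apply Hx; eapply model_le_trans; eauto.
  - intros z Ryz; apply Hx; eapply le_R; eauto.
Qed.

Hypothesis M_perfect : perfect M.

Lemma perfect_R_lt (x y : world M) : R M x y -> lt M x y.
Proof. apply M_perfect. Qed.

Lemma perfect_R_trans (x y z : world M) : R M x y -> R M y z -> R M x z.
Proof.
  intros Rxy Ryz. apply (proj1 M_perfect x y z Rxy). right; apply perfect_R_lt, Ryz.
Qed.

Lemma perfect_forces_Lob A (x : world M) :
  forces M x (Box (Imp (Box A) A)) -> forces M x (Box A).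
Proof.
  intros Hx y. induction y as [y IH] using (well_founded_ind (proj1 (proj2 M_perfect))).
  intros Rxy. apply (Hx y Rxy y (model_le_refl y)).
  intros z Ryz. apply IH; [exact Ryz|]. eapply perfect_R_trans; eauto.
Qed.

Theorem LC_sound A : LC_prf A -> forall x : world M, forces M x A.
Proof.
  induction 1; intro x; simpl.
  - intros y _ a z Hyz _. eapply forces_mono; eauto.
  - intros y _ f z Hyz g w Hzw a.
    exact (f w (model_le_trans _ _ _ Hyz Hzw) a w (model_le_refl w) (g w Hzw a)).
  - intros y _ [a _]; exact a.
  - intros y _ [_ b]; exact b.
  - intros y _ a z Hyz b; split; [eapply forces_mono; eauto|exact b].
  - intros y _ a; left; exact a.
  - intros y _ b; right; exact b.
  - intros y _ f z Hyz g w Hzw [a|b].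
    + exact (f w (model_le_trans _ _ _ Hyz Hzw) a).
    + exact (g w Hzw b).
  - intros y _ [].
  - intros y _ f z Hyz g w Rzw.
    exact (f w (le_R M y z w Hyz Rzw) w (model_le_refl w) (g w Rzw)).
  - intros y _ f z Ryz w Rzw. apply f. eapply perfect_R_trans; eauto.
  - intros y _. apply perfect_forces_Lob.
  - intros y _ a z Ryz. eapply forces_mono; [right; apply perfect_R_lt, Ryz|exact a].
  - exact (IHLC_prf1 x x (model_le_refl x) (IHLC_prf2 x)).
  - intros y _; apply IHLC_prf.
Qed.

End KripkeSemantics.
(** * Derivations from hypotheses *)

Inductive deriv (G : form -> Prop) : form -> Prop :=
| deriv_hyp A : G A -> deriv G A
| deriv_thm A : LC_prf A -> deriv G A
| deriv_mp A B : deriv G (Imp A B) -> deriv G A -> deriv G B.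

Definition ctx_add (G : form -> Prop) (F : form) : form -> Prop := fun y => G y \/ y = F.

Lemma LC_imp_refl A : LC_prf (Imp A A).
Proof.
  apply (rule_MP _ _ (rule_MP _ _ (ax_S A (Imp A A) A) (ax_K1 A (Imp A A))) (ax_K1 A A)).
Qed.

Lemma deriv_ax1 G A B : LC_prf (Imp A B) -> deriv G A -> deriv G B.
Proof. intros H; apply deriv_mp, deriv_thm, H. Qed.

Lemma deriv_ax2 G A B C : LC_prf (Imp A (Imp B C)) -> deriv G A -> deriv G B -> deriv G C.
Proof. intros H HA; apply deriv_mp, (deriv_ax1 _ _ _ H HA). Qed.

Lemma deriv_deduction G F B : deriv (ctx_add G F) B -> deriv G (Imp F B).
Proof.
  induction 1 as [A [HA| ->]|A HA|A B _ IH1 _ IH2].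
  - apply (deriv_ax1 _ A); [apply ax_K1|apply deriv_hyp, HA].
  - apply deriv_thm, LC_imp_refl.
  - apply (deriv_ax1 _ A); [apply ax_K1|apply deriv_thm, HA].
  - exact (deriv_ax2 _ _ _ _ (ax_S F A B) IH1 IH2).
Qed.

Lemma deriv_cut G G' A : deriv G A -> (forall x, G x -> deriv G' x) -> deriv G' A.
Proof. induction 1; intros; [auto|apply deriv_thm; auto|eapply deriv_mp; eauto]. Qed.

Lemma deriv_weaken G G' A : deriv G A -> (forall x, G x -> G' x) -> deriv G' A.
Proof. intros H HGG'; apply (deriv_cut _ _ _ H); intros; apply deriv_hyp; auto. Qed.

Lemma deriv_nec G A : deriv G A -> deriv (fun x => exists y, G y /\ x = Box y) (Box A).
Proof.
  induction 1 as [A HA|A HA|A B _ IH1 _ IH2].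
  - apply deriv_hyp; eauto.
  - apply deriv_thm, rule_Nec, HA.
  - exact (deriv_ax2 _ _ _ _ (ax_boxK A B) IH1 IH2).
Qed.

(* Hypotheses [y] may be boxed thanks to the axiom [y -> Box y] of LC. *)
Lemma deriv_Lob G A :
  deriv (ctx_add (fun y => G y \/ G (Box y)) (Box A)) A -> deriv G (Box A).
Proof.
  intro H. apply deriv_deduction, deriv_nec in H.
  apply (deriv_ax1 _ _ _ (ax_Lob A)), (deriv_cut _ _ _ H).
  intros z [y [[Hy|Hy] ->]]; [|apply deriv_hyp, Hy].
  apply (deriv_ax1 _ y); [apply ax_LC|apply deriv_hyp, Hy].
Qed.

Lemma deriv_nil A : deriv (fun _ => False) A -> LC_prf A.
Proof. induction 1; [contradiction|auto|eapply rule_MP; eauto]. Qed.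

Fixpoint sub (A : form) : list form :=
  A :: match A with
       | And B C | Or B C | Imp B C => sub B ++ sub C
       | Box B => sub B
       | _ => []
       end.

Lemma sub_self A : In A (sub A).
Proof. destruct A; left; reflexivity. Qed.

Lemma sub_trans A : forall X Y, In X (sub A) -> In Y (sub X) -> In Y (sub A).
Proof.
  induction A; simpl; intros X Y HX HY;
    destruct HX as [<-|HX]; simpl in HY; auto; try contradiction;
    try (right; apply in_app_or in HX; apply in_or_app; destruct HX; eauto).
  right; eauto.
Qed.
(** * The canonical model *)

Definition bits_le (b c : list bool) : Prop :=
  forall i, nth_error b i = Some true -> nth_error c i = Some true.

Definition ntrue (b : list bool) : nat := count_occ Bool.bool_dec b true.

Lemma ntrue_le b c : length b = length c -> bits_le b c -> ntrue b <= ntrue c.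
Proof.
  revert c; induction b as [|x b IH]; intros [|y c] Hlen Hle; try discriminate; [simpl; lia|].
  assert (Hle' : bits_le b c) by (intros i; apply (Hle (S i))).
  specialize (IH c ltac:(simpl in *; lia) Hle'). unfold ntrue in *.
  destruct x, y; simpl; try lia. discriminate (Hle 0 eq_refl).
Qed.

Lemma ntrue_lt b c : length b = length c -> bits_le b c -> b <> c -> ntrue b < ntrue c.
Proof.
  revert c; induction b as [|x b IH]; intros [|y c] Hlen Hle Hneq; try discriminate; [congruence|].
  assert (Hle' : bits_le b c) by (intros i; apply (Hle (S i))).
  pose proof (ntrue_le b c ltac:(simpl in *; lia) Hle'). unfold ntrue in *.
  destruct x, y; simpl; try lia.
  - assert (b <> c) by congruence. specialize (IH c ltac:(simpl in *; lia) Hle' H0). lia.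
  - discriminate (Hle 0 eq_refl).
  - assert (b <> c) by congruence. specialize (IH c ltac:(simpl in *; lia) Hle' H0). lia.
Qed.

Section CanonicalModel.
Variable Phi : list form.
Hypothesis Phi_sub_closed : forall X Y, In X Phi -> In Y (sub X) -> In Y Phi.

Lemma In_Phi_and B C : In (And B C) Phi -> In B Phi /\ In C Phi.
Proof. intro H; split; apply (Phi_sub_closed _ _ H); simpl; auto using sub_self, in_or_app. Qed.
Lemma In_Phi_or B C : In (Or B C) Phi -> In B Phi /\ In C Phi.
Proof. intro H; split; apply (Phi_sub_closed _ _ H); simpl; auto using sub_self, in_or_app. Qed.
Lemma In_Phi_imp B C : In (Imp B C) Phi -> In B Phi /\ In C Phi.
Proof. intro H; split; apply (Phi_sub_closed _ _ H); simpl; auto using sub_self, in_or_app. Qed.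
Lemma In_Phi_box B : In (Box B) Phi -> In B Phi.
Proof. intro H; apply (Phi_sub_closed _ _ H); simpl; auto using sub_self. Qed.

(* A theory is a bit vector selecting formulas of [Phi]; this canonical form keeps the
   canonical model finite. *)
Definition mem (b : list bool) (D : form) : Prop :=
  exists i, nth_error Phi i = Some D /\ nth_error b i = Some true.

Lemma mem_In b D : mem b D -> In D Phi.
Proof. intros [i [Hi _]]; eapply nth_error_In; eauto. Qed.

Lemma mem_bits_le b c D : bits_le b c -> mem b D -> mem c D.
Proof. intros Hbc [i [Hi Hb]]; exists i; auto. Qed.

Definition prime_theory (b : list bool) : Prop :=
  length b = length Phi /\
  (forall D, In D Phi -> deriv (mem b) D -> mem b D) /\
  (forall D E, mem b (Or D E) -> mem b D \/ mem b E) /\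
  ~ deriv (mem b) Bot.

Definition bits (Delta : form -> Prop) : list bool :=
  map (fun D => if excluded_middle_informative (Delta D) then true else false) Phi.

Lemma nth_error_bits Delta i D :
  nth_error Phi i = Some D -> nth_error (bits Delta) i = Some true <-> Delta D.
Proof.
  intro Hi. unfold bits. rewrite nth_error_map, Hi; simpl.
  destruct (excluded_middle_informative (Delta D)); split; congruence || tauto.
Qed.

Lemma mem_bits Delta D : mem (bits Delta) D <-> In D Phi /\ Delta D.
Proof.
  split.
  - intros [i [Hi Hb]]. split; [eapply nth_error_In; eauto|]. apply (nth_error_bits _ _ _ Hi), Hb.
  - intros [HD HDelta]. destruct (In_nth_error _ _ HD) as [i Hi].
    exists i; split; [exact Hi|]. apply (nth_error_bits _ _ _ Hi), HDelta.
Qed.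

Lemma bits_le_bits b Delta :
  length b = length Phi -> (forall D, mem b D -> Delta D) -> bits_le b (bits Delta).
Proof.
  intros Hlen Hsub i Hb. destruct (nth_error Phi i) as [D|] eqn:Hi.
  - apply (nth_error_bits _ _ _ Hi), Hsub. exists i; auto.
  - apply nth_error_None in Hi. assert (i < length b) by (apply nth_error_Some; congruence). lia.
Qed.

(* Lindenbaum's construction: go through [l], adding each formula that keeps [B] underivable. *)
Fixpoint ext (B : form) (G : form -> Prop) (l : list form) : form -> Prop :=
  match l with
  | [] => G
  | F :: l' => ext B (fun x => G x \/ (x = F /\ ~ deriv (ctx_add G F) B)) l'
  end.

Lemma ext_incl B l : forall G x, G x -> ext B G l x.
Proof. induction l; simpl; auto. Qed.

Lemma ext_not_deriv B l : forall G, ~ deriv G B -> ~ deriv (ext B G l) B.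
Proof.
  induction l as [|F l IH]; simpl; intros G HG; [exact HG|]. apply IH. intro HB.
  destruct (classic (deriv (ctx_add G F) B)) as [HF|HF].
  - apply HG. apply (deriv_weaken _ _ _ HB). intros x [Hx|[_ Hx]]; tauto.
  - apply HF. apply (deriv_weaken _ _ _ HB). intros x [Hx|[-> _]]; [left|right]; auto.
Qed.

Lemma ext_max B l : forall G F, In F l -> ext B G l F \/ deriv (ctx_add (ext B G l) F) B.
Proof.
  induction l as [|F' l IH]; simpl; intros G F HF; [contradiction|].
  destruct HF as [<-|HF]; [|apply IH, HF].
  destruct (classic (deriv (ctx_add G F') B)) as [HB|HB].
  - right. apply (deriv_weaken _ _ _ HB). intros x [Hx| ->]; [left; apply ext_incl|right]; auto.
  - left. apply ext_incl. right; auto.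
Qed.

Definition saturated (B : form) (Delta : form -> Prop) : Prop :=
  ~ deriv Delta B /\ forall D, In D Phi -> Delta D \/ deriv (ctx_add Delta D) B.

Lemma lindenbaum G B : ~ deriv G B -> exists Delta, (forall D, G D -> Delta D) /\ saturated B Delta.
Proof.
  intro HG. exists (ext B G Phi). split; [intros; apply ext_incl; auto|split].
  - apply ext_not_deriv, HG.
  - intros D HD; apply ext_max, HD.
Qed.

Lemma saturated_prime B Delta : saturated B Delta -> prime_theory (bits Delta).
Proof.
  intros [HB Hmax].
  assert (Hcut : forall D, In D Phi -> deriv Delta D -> Delta D).
  { intros D HD Hder. destruct (Hmax D HD) as [|HDB]; [assumption|].
    exfalso; apply HB, (deriv_mp _ D); [apply deriv_deduction, HDB|exact Hder]. }
  assert (Hbits : forall X, deriv (mem (bits Delta)) X -> deriv Delta X).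
  { intros X H; apply (deriv_weaken _ _ _ H); intros x Hx; apply mem_bits in Hx; tauto. }
  split; [apply length_map|split; [|split]].
  - intros D HD H. apply mem_bits; auto.
  - intros D E H. apply mem_bits in H as [HDE H].
    destruct (In_Phi_or _ _ HDE) as [HD HE].
    destruct (Hmax D HD) as [HD'|HDB]; [left; apply mem_bits; auto|].
    destruct (Hmax E HE) as [HE'|HEB]; [right; apply mem_bits; auto|].
    exfalso; apply HB. apply (deriv_mp _ (Or D E)); [|apply deriv_hyp, H].
    apply (deriv_ax2 _ _ _ _ (ax_orE D E B)); apply deriv_deduction; assumption.
  - intro H. apply HB, (deriv_ax1 _ Bot); [apply ax_efq|apply Hbits, H].
Qed.

(* [chain b l]: [l] lists the theories strictly increasing from [b] onwards, [b] excluded. *)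
Fixpoint chain (b : list bool) (l : list (list bool)) : Prop :=
  match l with
  | [] => True
  | c :: l' => (bits_le b c /\ b <> c /\ prime_theory c) /\ chain c l'
  end.

Fixpoint chain_end (b : list bool) (l : list (list bool)) : list bool :=
  match l with [] => b | c :: l' => chain_end c l' end.

Lemma chain_end_app l : forall b s, chain_end b (l ++ s) = chain_end (chain_end b l) s.
Proof. induction l; simpl; auto. Qed.

Lemma chain_app l : forall b s, chain b (l ++ s) <-> chain b l /\ chain (chain_end b l) s.
Proof. induction l; simpl; intros b s; [tauto|]. rewrite IHl. tauto. Qed.

Lemma chain_end_le l : forall b, chain b l -> bits_le b (chain_end b l).
Proof.
  induction l; simpl; intros b H; [intros i h; exact h|].
  intros i h. apply IHl; [apply H|]. apply H, h.
Qed.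

Lemma chain_end_prime l : forall b, prime_theory b -> chain b l -> prime_theory (chain_end b l).
Proof. induction l; simpl; intros b Hb H; [exact Hb|]. apply IHl; tauto. Qed.

(* Each step adds a formula, so a chain has at most [length Phi] steps. *)
Lemma chain_length l : forall b, prime_theory b -> chain b l -> length l + ntrue b <= length Phi.
Proof.
  induction l as [|c l IH]; simpl; intros b Hb H.
  - pose proof (count_occ_bound Bool.bool_dec true b). destruct Hb; unfold ntrue; lia.
  - destruct H as [[Hbc [Hneq Hc]] Hl]. specialize (IH c Hc Hl).
    pose proof (ntrue_lt b c ltac:(destruct Hb, Hc; lia) Hbc Hneq). lia.
Qed.

Lemma chain_In_length l : forall b, chain b l -> forall c, In c l -> length c = length Phi.
Proof.
  induction l; simpl; intros b H c Hc; [contradiction|].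
  destruct Hc as [<-|Hc]; [apply H|eapply IHl; [apply H|exact Hc]].
Qed.

Variable root : list bool.
Hypothesis root_prime : prime_theory root.

Definition W : Type := {l : list (list bool) | chain root l}.
Definition theory (x : W) : list bool := chain_end root (proj1_sig x).
Definition ltW (x y : W) : Prop := exists s, s <> [] /\ proj1_sig y = proj1_sig x ++ s.
Definition RW (x y : W) : Prop :=
  ltW x y /\ forall C, mem (theory x) (Box C) -> mem (theory y) C.
Definition VW (p : nat) (x : W) : Prop := mem (theory x) (Var p).

Lemma W_eq (x y : W) : proj1_sig x = proj1_sig y -> x = y.
Proof. destruct x, y; simpl; intros ->. f_equal; apply proof_irrelevance. Qed.

Lemma leW_prefix x y : (x = y \/ ltW x y) <-> exists s, proj1_sig y = proj1_sig x ++ s.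
Proof.
  split.
  - intros [->|[s [_ H]]]; [exists []; rewrite app_nil_r; auto|eauto].
  - intros [[|c s] H].
    + left; apply W_eq. rewrite app_nil_r in H; auto.
    + right; exists (c :: s); split; [discriminate|auto].
Qed.

Lemma theory_prime x : prime_theory (theory x).
Proof. apply chain_end_prime; [exact root_prime|apply proj2_sig]. Qed.

Lemma leW_bits_le x y : (x = y \/ ltW x y) -> bits_le (theory x) (theory y).
Proof.
  intro H; apply leW_prefix in H as [s H]. unfold theory. rewrite H, chain_end_app.
  apply chain_end_le. pose proof (proj2_sig y) as Hy. rewrite H in Hy.
  apply chain_app in Hy; tauto.
Qed.

Lemma ltW_irrefl x : ~ ltW x x.
Proof.
  intros [s [Hs H]]. apply (f_equal (@length _)) in H. rewrite length_app in H.
  destruct s; [congruence|simpl in H; lia].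
Qed.

Lemma ltW_trans x y z : ltW x y -> ltW y z -> ltW x z.
Proof.
  intros [s [Hs Hxy]] [t [_ Hyz]]. exists (s ++ t). split.
  - destruct s; [congruence|discriminate].
  - rewrite Hyz, Hxy, app_assoc; auto.
Qed.

Lemma leW_RW x y z : (x = y \/ ltW x y) -> RW y z -> RW x z.
Proof.
  intros Hxy [Hyz Hbox]. split.
  - destruct Hxy as [->|Hxy]; [exact Hyz|eapply ltW_trans; eauto].
  - intros C HC. apply Hbox. eapply mem_bits_le; [apply leW_bits_le, Hxy|exact HC].
Qed.

Lemma VW_mono p x y : (x = y \/ ltW x y) -> VW p x -> VW p y.
Proof. intros Hxy; apply mem_bits_le, leW_bits_le, Hxy. Qed.

Definition canonical_model : model := Model W ltW RW VW ltW_irrefl ltW_trans leW_RW VW_mono.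

Lemma canonical_perfect : perfect canonical_model.
Proof.
  split; [|split].
  - intros x y z [Hxy Hbox] Hyz. split.
    + destruct Hyz as [<-|Hyz]; [exact Hxy|eapply ltW_trans; eauto].
    + intros C HC. eapply mem_bits_le; [apply leW_bits_le, Hyz|apply Hbox, HC].
  - apply (well_founded_lt_compat _ (fun x : W => S (length Phi) - length (proj1_sig x))).
    intros y x [[s [Hs H]] _].
    pose proof (chain_length _ _ root_prime (proj2_sig y)).
    rewrite H, length_app in *. destruct s; [congruence|]. cbn [length] in *. lia.
  - intros x y [H _]; exact H.
Qed.

Lemma canonical_tree : tree_frame canonical_model.
Proof.
  split.
  - exists (exist _ [] I : W). intro x. apply leW_prefix. exists (proj1_sig x); auto.
  - intros x y z Hyx Hzx. apply leW_prefix in Hyx as [s1 H1], Hzx as [s2 H2].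
    rewrite H1 in H2. destruct (app_eq_app _ _ _ _ H2) as [l [[E _]|[E _]]].
    + right; apply leW_prefix; eauto.
    + left; apply leW_prefix; eauto.
Qed.

Fixpoint bit_vectors (k : nat) : list (list bool) :=
  match k with
  | 0 => [[]]
  | S k => flat_map (fun l => [true :: l; false :: l]) (bit_vectors k)
  end.

Lemma In_bit_vectors k : forall b, length b = k -> In b (bit_vectors k).
Proof.
  induction k; intros [|x b] H; try discriminate; simpl; auto.
  apply in_flat_map. exists b; split; [apply IHk; simpl in H; lia|destruct x; simpl; auto].
Qed.

Fixpoint lists_upto {A} (m : nat) (E : list A) : list (list A) :=
  match m with
  | 0 => [[]]
  | S m => [] :: flat_map (fun e => map (cons e) (lists_upto m E)) E
  end.

Lemma In_lists_upto {A} m (E : list A) :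
  forall l, length l <= m -> (forall x, In x l -> In x E) -> In l (lists_upto m E).
Proof.
  induction m; intros [|x l] Hlen HE; simpl in *; auto; try lia.
  right. apply in_flat_map. exists x; split; auto. apply in_map, IHm; auto; lia.
Qed.

Lemma canonical_finite : finite_model canonical_model.
Proof.
  exists (flat_map (fun l => match excluded_middle_informative (chain root l) with
                            | left p => [exist _ l p] | right _ => [] end)
                   (lists_upto (length Phi) (bit_vectors (length Phi)))).
  intros [l p]. apply in_flat_map. exists l; split.
  - apply In_lists_upto.
    + pose proof (chain_length _ _ root_prime p). lia.
    + intros c Hc. apply In_bit_vectors. eapply chain_In_length; eauto.
  - destruct (excluded_middle_informative (chain root l)); [|contradiction].
    left; apply W_eq; reflexivity.
Qed.

Lemma world_above (x : W) c :
  prime_theory c -> bits_le (theory x) c -> exists y, le canonical_model x y /\ theory y = c.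
Proof.
  intros Hc Hxc. destruct (classic (theory x = c)) as [<-|Hneq]; [exists x; split; [left|]; auto|].
  assert (Hch : chain root (proj1_sig x ++ [c])).
  { apply chain_app; split; [apply proj2_sig|]. simpl; tauto. }
  exists (exist _ _ Hch). split.
  - right; exists [c]; split; [discriminate|reflexivity].
  - unfold theory; simpl. rewrite chain_end_app. reflexivity.
Qed.

Lemma theory_closed x D : In D Phi -> deriv (mem (theory x)) D -> mem (theory x) D.
Proof. apply theory_prime. Qed.

Lemma theory_imp_witness x A B :
  In (Imp A B) Phi -> ~ mem (theory x) (Imp A B) ->
  exists y, le canonical_model x y /\ mem (theory y) A /\ ~ mem (theory y) B.
Proof.
  intros HAB Hn. destruct (In_Phi_imp _ _ HAB) as [HA _].
  assert (Hnd : ~ deriv (ctx_add (mem (theory x)) A) B)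
    by (intro H; apply Hn, theory_closed, deriv_deduction, H; exact HAB).
  destruct (lindenbaum _ _ Hnd) as [Delta [Hsub Hsat]].
  destruct (world_above x (bits Delta)) as [y [Hxy Hy]].
  - eapply saturated_prime; eauto.
  - apply bits_le_bits; [apply theory_prime|]. intros D HD; apply Hsub; left; exact HD.
  - exists y; split; [exact Hxy|]. rewrite Hy, !mem_bits. split.
    + split; [exact HA|apply Hsub; right; reflexivity].
    + intros [_ HB]. apply (proj1 Hsat), deriv_hyp, HB.
Qed.

Lemma theory_box_witness x A :
  In (Box A) Phi -> ~ mem (theory x) (Box A) ->
  exists y, R canonical_model x y /\ ~ mem (theory y) A.
Proof.
  intros HBA Hn.
  assert (Hnd : ~ deriv (ctx_add (fun y => mem (theory x) y \/ mem (theory x) (Box y)) (Box A)) A)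
    by (intro H; apply Hn, theory_closed, deriv_Lob, H; exact HBA).
  destruct (lindenbaum _ _ Hnd) as [Delta [Hsub Hsat]].
  destruct (world_above x (bits Delta)) as [y [Hxy Hy]].
  - eapply saturated_prime; eauto.
  - apply bits_le_bits; [apply theory_prime|]. intros D HD; apply Hsub; left; left; exact HD.
  - assert (HyBA : mem (theory y) (Box A))
      by (rewrite Hy; apply mem_bits; split; [exact HBA|apply Hsub; right; reflexivity]).
    exists y; split; [split|].
    + destruct Hxy as [<-|Hxy]; [contradiction|exact Hxy].
    + intros C HC. rewrite Hy; apply mem_bits.
      split; [apply In_Phi_box, (mem_In _ _ HC)|apply Hsub; left; right; exact HC].
    + rewrite Hy, mem_bits. intros [_ HA]. apply (proj1 Hsat), deriv_hyp, HA.
Qed.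

Lemma canonical_truth A : In A Phi -> forall x, forces canonical_model x A <-> mem (theory x) A.
Proof.
  induction A as [p| |A IHA B IHB|A IHA B IHB|A IHA B IHB|A IHA]; intros HAB x; simpl.
  - reflexivity.
  - split; [tauto|]. intro H. apply (theory_prime x), deriv_hyp, H.
  - destruct (In_Phi_and _ _ HAB) as [HA HB]. rewrite IHA, IHB by assumption. split.
    + intros [Ha Hb]. apply theory_closed; [exact HAB|].
      apply (deriv_ax2 _ A B); [apply ax_andI|apply deriv_hyp, Ha|apply deriv_hyp, Hb].
    + intro H. split; apply theory_closed; try assumption.
      * apply (deriv_ax1 _ (And A B)); [apply ax_andE1|apply deriv_hyp, H].
      * apply (deriv_ax1 _ (And A B)); [apply ax_andE2|apply deriv_hyp, H].
  - destruct (In_Phi_or _ _ HAB) as [HA HB]. rewrite IHA, IHB by assumption. split.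
    + intros [Ha|Hb]; apply theory_closed; try exact HAB.
      * apply (deriv_ax1 _ A); [apply ax_orI1|apply deriv_hyp, Ha].
      * apply (deriv_ax1 _ B); [apply ax_orI2|apply deriv_hyp, Hb].
    + intro H; apply (theory_prime x), H.
  - destruct (In_Phi_imp _ _ HAB) as [HA HB]. split.
    + intro H. apply NNPP; intro Hn.
      destruct (theory_imp_witness x A B HAB Hn) as [y [Hxy [Hya Hyb]]].
      apply Hyb, IHB, (H y Hxy), IHA; assumption.
    + intros H y Hxy Hya. apply IHB; [exact HB|]. apply IHA in Hya; [|exact HA].
      apply theory_closed; [exact HB|]. apply (deriv_mp _ A); apply deriv_hyp; [|exact Hya].
      eapply mem_bits_le; [apply leW_bits_le, Hxy|exact H].
  - pose proof (In_Phi_box _ HAB) as HA. split.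
    + intro H. apply NNPP; intro Hn.
      destruct (theory_box_witness x A HAB Hn) as [y [Rxy Hy]].
      apply Hy, IHA, H, Rxy; exact HA.
    + intros H y [_ Hbox]. apply IHA; [exact HA|apply Hbox, H].
Qed.
End CanonicalModel.

Theorem LC_complete A :
  (forall M, finite_model M -> perfect M -> tree_frame M -> forall x : world M, forces M x A) ->
  LC_prf A.
Proof.
  intro Hvalid. apply NNPP; intro HnA.
  assert (Hnd : ~ deriv (fun _ => False) A) by (intro H; apply HnA, deriv_nil, H).
  destruct (lindenbaum (sub A) _ _ Hnd) as [Delta [_ Hsat]].
  pose proof (saturated_prime _ (sub_trans A) _ _ Hsat) as Hroot.
  pose proof (Hvalid _ (canonical_finite _ _ Hroot) (canonical_perfect _ _ Hroot)
                (canonical_tree _ _) (exist _ [] I)) as HA.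
  apply (canonical_truth _ (sub_trans A) _ Hroot A (sub_self A)), mem_bits in HA.
  apply (proj1 Hsat), deriv_hyp, HA.
Qed.

Theorem theorem4p25 : forall A : form,
  LC_prf A <->
  (forall M : model, finite_model M -> perfect M -> tree_frame M ->
     forall x : world M, forces M x A).
Proof.
  intro A; split.
  - intros HA M _ HM _. apply LC_sound; assumption.
  - apply LC_complete.
Qed.
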